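(* Let $P$ be a finite point set in general position and let $p\in P$ have degree exactly one in $G_\bigtriangledown(P)$. Suppose there are distinct $i,j\in\{1,2,3\}$ with $V_i(p)\neq\emptyset$ and $V_j(p)\neq\emptyset$, and let $k$ be the element of $\{1,2,3\}\setminus\{i,j\}$. Then $\overline{V}_k(p)\neq\emptyset$.
   Context: A finite point set $P$ in the plane is in general position if no line through two points of $P$ makes an angle of $0^\circ$, $60^\circ$ or $120^\circ$ with the horizontal. A down-triangle is an equilateral triangle with one side parallel to the $x$-axis and the corner opposite to this side below that side. $G_\bigtriangledown(P)$ is the graph with vertex set $P$ in which $p,q$ are adjacent iff some (closed) down-triangle contains $p$ and $q$ and no other point of $P$. For a point $p$, let $A_i(p)$ ($i=1,\dots,6$) be the closed cone with apex $p$ between the rays from $p$ at angles $(i-1)\pi/3$ and $i\pi/3$ measured counter-clockwise from the positive $x$-axis; $C_1(p)=A_1(p)$, $C_2(p)=A_3(p)$, $C_3(p)=A_5(p)$ and $\overline{C}_1(p)=A_4(p)$, $\overline{C}_2(p)=A_6(p)$, $\overline{C}_3(p)=A_2(p)$. For $i\in\{1,2,3\}$, $V_i(p)=\{p'\in P\setminus\{p\}: p'\in C_i(p)\}$ and $\overline{V}_i(p)=\{p'\in P\setminus\{p\}: p'\in\overline{C}_i(p)\}$. *)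

(* points of the plane are pairs over an arbitrary real closed field R
   (the statement is purely order-algebraic, needing only sqrt 3). *)
From HB Require Import structures.
From mathcomp Require Import all_boot all_order all_algebra.
Set Implicit Arguments. Unset Strict Implicit. Unset Printing Implicit Defensive.
Import Order.TTheory GRing.Theory Num.Theory.
Local Open Scope ring_scope.

Definition pt (R : rcfType) := (R * R)%type.

Definition s3 (R : rcfType) : R := Num.sqrt 3.

(* General position: no line through two distinct points of P makes an angle of
   0, 60 or 120 degrees with the horizontal, i.e. its direction (dx,dy) is not
   parallel to (1,0), (1,sqrt3) or (-1,sqrt3). *)
Definition general_position (R : rcfType) (P : seq (pt R)) : Prop :=
  forall p q, p \in P -> q \in P -> p != q ->
    let dx := q.1 - p.1 in let dy := q.2 - p.2 in
    [/\ dy != 0, dy != s3 R * dx & dy != - (s3 R * dx)].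

(* Closed down-triangle with bottom apex (a,b) and height h (top side on y = b + h,
   other sides of slopes +-sqrt3 through the apex). *)
Definition in_down_tri (R : rcfType) (a b h : R) (q : pt R) : bool :=
  (q.2 <= b + h) && (s3 R * `|q.1 - a| <= q.2 - b).

Definition adj (R : rcfType) (P : seq (pt R)) (p q : pt R) : Prop :=
  p != q /\
  exists a b h : R, [/\ 0 < h, in_down_tri a b h p, in_down_tri a b h q &
     forall r, r \in P -> in_down_tri a b h r -> r = p \/ r = q].

Definition dir (R : rcfType) (m : nat) : pt R :=
  match (m %% 6)%N with
  | 0 => (1, 0)
  | 1 => (1/2, s3 R / 2)
  | 2 => (-(1/2), s3 R / 2)
  | 3 => (-1, 0)
  | 4 => (-(1/2), -(s3 R / 2))
  | _ => (1/2, -(s3 R / 2))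
  end.

(* A_n(p), n = 1..6: closed cone with apex p between the rays at angles
   (n-1)pi/3 and n pi/3, i.e. p + nonnegative combinations of the two directions. *)
Definition in_A (R : rcfType) (n : nat) (p q : pt R) : Prop :=
  exists u v : R, [/\ 0 <= u, 0 <= v &
    q = (p.1 + u * (dir R n.-1).1 + v * (dir R n).1,
         p.2 + u * (dir R n.-1).2 + v * (dir R n).2)].

(* C_1 = A_1, C_2 = A_3, C_3 = A_5 ; Cbar_1 = A_4, Cbar_2 = A_6, Cbar_3 = A_2. *)
Definition C_idx (i : nat) : nat := match i with 1 => 1 | 2 => 3 | _ => 5 end.
Definition Cbar_idx (i : nat) : nat := match i with 1 => 4 | 2 => 6 | _ => 2 end.

Definition V_nonempty (R : rcfType) (P : seq (pt R)) (i : nat) (p : pt R) : Prop :=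
  exists q, [/\ q \in P, q != p & in_A (C_idx i) p q].
Definition Vbar_nonempty (R : rcfType) (P : seq (pt R)) (i : nat) (p : pt R) : Prop :=
  exists q, [/\ q \in P, q != p & in_A (Cbar_idx i) p q].

Definition degree_one (R : rcfType) (P : seq (pt R)) (p : pt R) : Prop :=
  exists q, [/\ q \in P, adj P p q &
    forall q', q' \in P -> adj P p q' -> q' = q].

From HB Require Import structures.
From mathcomp Require Import all_boot all_order all_algebra.
From mathcomp Require Import lra ring.

(* Write lev60 q = q.2 - sqrt3 q.1 and lev120 q = q.2 + sqrt3 q.1;
   these are constant along lines at 60 and 120 degrees, and
   lev60 q + lev120 q = 2 q.2.  A closed down-triangle is then exactly a set
   { q | q.2 <= Y, c60 <= lev60 q, c120 <= lev120 q } with c60 + c120 < 2 Y.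
   For two points p <> r of P, the smallest down-triangle containing both is
   the "span" of p and r.  Among the points x <> p of P lying in the span of p
   and r, one with the smallest span of p and x is a neighbour of p in
   G_down(P): its span contains no further point of P, by general position.
   If V_i(p) is nonempty, the span of p with a point of C_i(p) lies in a
   half-plane H_i(p) bounded by a line through p, hence so does the neighbour.
   When p has a unique neighbour q, q lies in H_i(p) and H_j(p), and the
   intersection of these two half-planes is the cone Cbar_k(p). *)

Set Implicit Arguments. Unset Strict Implicit. Unset Printing Implicit Defensive.
Import Order.TTheory GRing.Theory Num.Theory.
Local Open Scope ring_scope.

Lemma max_eq_lt (d : Order.disp_t) (T : orderType d) (x a b : T) :
  Order.max x a = Order.max x b -> a != b -> a != x -> (a < x)%O.
Proof.
move=> eq_max nab nax; rewrite lt_neqAle nax /=.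
move: eq_max; case: (leP a x) => // _.
by case: (leP x b) => _ eq_a; rewrite eq_a eqxx in nab nax.
Qed.

Lemma min_eq_gt (d : Order.disp_t) (T : orderType d) (x a b : T) :
  Order.min x a = Order.min x b -> a != b -> a != x -> (x < a)%O.
Proof.
move=> eq_min nab nax; rewrite lt_neqAle eq_sym nax /=.
move: eq_min; case: (leP x a) => // _.
by case: (leP x b) => _ eq_a; rewrite eq_a eqxx in nab nax.
Qed.

Lemma seq_argmin (R : realDomainType) (T : eqType) (s : seq T) (f : T -> R) :
  s != [::] -> exists2 x, x \in s & forall y, y \in s -> f x <= f y.
Proof.
elim: s => [//|a s IH] _; case: (eqVneq s [::]) => [->|/IH [x xs min_x]].
  by exists a => [|y]; rewrite ?mem_head // inE => /eqP ->.
case: (leP (f a) (f x)) => [le_ax|lt_xa].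
  exists a => [|y]; rewrite ?mem_head // inE => /orP[/eqP -> //|ys].
  exact: le_trans le_ax (min_x y ys).
exists x => [|y]; first by rewrite inE xs orbT.
by rewrite inE => /orP[/eqP ->|/min_x //]; apply: ltW.
Qed.

Section DownTriangles.
Variable R : rcfType.
Implicit Types (p q r x : pt R) (P : seq (pt R)).

Lemma s3_gt0 : 0 < s3 R.
Proof. by rewrite /s3 sqrtr_gt0 ltr0n. Qed.

Definition lev60 q : R := q.2 - s3 R * q.1.
Definition lev120 q : R := q.2 + s3 R * q.1.

Lemma lev_sum q : lev60 q + lev120 q = 2 * q.2.
Proof. rewrite /lev60 /lev120; ring. Qed.

Lemma gp_levels P p q : general_position P -> p \in P -> q \in P -> p != q ->
  [/\ p.2 != q.2, lev60 p != lev60 q & lev120 p != lev120 q].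
Proof.
move=> gp pP qP npq; have [dy_neq0 dy_60 dy_120] := gp p q pP qP npq.
rewrite /lev60 /lev120; split.
- by apply: contraNneq dy_neq0 => ->; rewrite subrr.
- by apply: contraNneq dy_60 => eq_60; apply/eqP; rewrite mulrBr; lra.
- by apply: contraNneq dy_120 => eq_120; apply/eqP; rewrite mulrBr; lra.
Qed.

Definition in_tri (Y c60 c120 : R) q : bool :=
  [&& q.2 <= Y, c60 <= lev60 q & c120 <= lev120 q].

Lemma down_tri_of_levels (Y c60 c120 : R) : c60 + c120 < 2 * Y ->
  exists a b h : R, 0 < h /\ forall q, in_down_tri a b h q = in_tri Y c60 c120 q.
Proof.
move=> nondeg; have s_gt0 := s3_gt0; have s_neq0 : s3 R != 0 by rewrite gt_eqF.
exists ((c120 - c60) / (2 * s3 R)), ((c60 + c120) / 2), (Y - (c60 + c120) / 2).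
split=> [|q]; first lra.
have apex_x : s3 R * ((c120 - c60) / (2 * s3 R)) = (c120 - c60) / 2 by field.
rewrite /in_down_tri /in_tri /lev60 /lev120.
rewrite -{1}(ger0_norm (ltW s_gt0)) -normrM ler_norml mulrBr apex_x.
have -> : (c60 + c120) / 2 + (Y - (c60 + c120) / 2) = Y by ring.
by apply/idP/idP => /and3P[-> h1 h2]; apply/andP; split => //; apply/andP; split; lra.
Qed.

(* The span of p and r: the smallest down-triangle containing both. *)
Definition top p r : R := Num.max p.2 r.2.
Definition bot60 p r : R := Num.min (lev60 p) (lev60 r).
Definition bot120 p r : R := Num.min (lev120 p) (lev120 r).
Definition in_span p r : pred (pt R) := in_tri (top p r) (bot60 p r) (bot120 p r).
Definition span_size p r : R := 2 * top p r - bot60 p r - bot120 p r.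

Lemma in_span_l p r : in_span p r p.
Proof. by rewrite /in_span /in_tri le_max ge_min ge_min !lexx. Qed.

Lemma in_span_r p r : in_span p r r.
Proof. by rewrite /in_span /in_tri le_max ge_min ge_min !lexx !orbT. Qed.

Lemma span_mono p r x : in_span p r x ->
  [/\ top p x <= top p r, bot60 p r <= bot60 p x & bot120 p r <= bot120 p x].
Proof.
have := in_span_l p r; rewrite /in_span /in_tri => /and3P[yp l60p l120p].
by move=> /and3P[yx l60x l120x]; rewrite ge_max le_min le_min yp yx l60p l60x l120p l120x.
Qed.

Lemma in_span_trans p r x y : in_span p r x -> in_span p x y -> in_span p r y.
Proof.
move=> /span_mono[le_top le60 le120] /and3P[yy l60y l120y].
by apply/and3P; split; [apply: le_trans le_top|apply: le_trans l60y|apply: le_trans l120y].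
Qed.

Lemma span_nondegenerate P p r : general_position P -> p \in P -> r \in P -> p != r ->
  bot60 p r + bot120 p r < 2 * top p r.
Proof.
move=> gp pP rP npr; have [/lt_total dy _ _] := gp_levels gp pP rP npr.
have := in_span_l p r; have := in_span_r p r; rewrite /in_span /in_tri.
move=> /and3P[yr l60r l120r] /and3P[yp l60p l120p].
case/orP: dy => dy.
- by move: (lev_sum p) l60p l120p yr dy; clear; lra.
- by move: (lev_sum r) l60r l120r yp dy; clear; lra.
Qed.

(* Distinct points of P other than p have distinct spans with p: a common
   span would force both below p and above p in both level coordinates. *)
Lemma span_inj P p a b : general_position P -> p \in P -> a \in P -> b \in P ->
  a != p -> b != p ->
  top p a = top p b -> bot60 p a = bot60 p b -> bot120 p a = bot120 p b -> a = b.
Proof.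
move=> gp pP aP bP nap nbp et e60 e120; apply/eqP/negPn/negP => nab.
have [ny n60 n120] := gp_levels gp aP bP nab.
have [ny' n60' n120'] := gp_levels gp aP pP nap.
have below := max_eq_lt et ny ny'; have right60 := min_eq_gt e60 n60 n60'.
have right120 := min_eq_gt e120 n120 n120'.
move: (lev_sum p) (lev_sum a); lra.
Qed.

(* Every point r <> p of P yields a neighbour of p in G_down(P) inside the
   span of p and r: a point of that span with the smallest span with p. *)
Lemma neighbour_in_span P p r : general_position P -> p \in P -> r \in P -> r != p ->
  exists2 r', r' \in P & adj P p r' /\ in_span p r r'.
Proof.
move=> gp pP rP nrp.
pose cand := [seq x <- P | (x != p) && in_span p r x].
have : cand != [::].
  by apply/eqP => /(congr1 (fun s => r \in s)); rewrite mem_filter nrp in_span_r rP.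
case/(seq_argmin (span_size p)) => r'; rewrite mem_filter /= => /andP[/andP[nr'p span_r'] r'P] min_r'.
exists r' => //; split=> //.
have npr' : p != r' by rewrite eq_sym.
have [a [b [h [h_gt0 tri_span]]]] := down_tri_of_levels (span_nondegenerate gp pP r'P npr').
split=> //; exists a, b, h; rewrite !tri_span.
split=> //; [exact: in_span_l | exact: in_span_r | move=> x xP].
rewrite tri_span => span_x; case: (eqVneq x p) => [-> |nxp]; [by left|right].
have [le_top le60 le120] := span_mono span_x.
have := min_r' x; rewrite mem_filter nxp xP (in_span_trans span_r' span_x) => /(_ isT).
rewrite /span_size => le_size.
by apply: (span_inj gp pP xP r'P nxp nr'p); lra.
Qed.

(* H_i(p): the closed half-plane bounded by a line through p which contains
   the cone C_i(p) (the line at 120 degrees for i = 1, at 60 degrees for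
   i = 2, the horizontal one for i = 3). *)
Definition side (i : nat) p q : Prop :=
  match i with 1%N => lev120 p <= lev120 q | 2%N => lev60 p <= lev60 q | _ => q.2 <= p.2 end.

Lemma cone_side i p q : i \in [:: 1; 2; 3]%N -> in_A (C_idx i) p q -> side i p q.
Proof.
have s_gt0 := s3_gt0.
rewrite !inE => /or3P[]/eqP-> [u [v [u_ge0 v_ge0 ->]]];
have su := mulr_ge0 (ltW s_gt0) u_ge0; have sv := mulr_ge0 (ltW s_gt0) v_ge0;
rewrite /side /lev60 /lev120 /dir /=; lra.
Qed.

Lemma span_side i p u x : side i p u -> in_span p u x -> side i p x.
Proof.
rewrite /in_span /in_tri /top /bot60 /bot120 /side => s /and3P[yx l60x l120x].
case: i s => [|[|[|i]]] s; first [by rewrite (max_l s) in yx | by rewrite (min_l s) in l60x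
  | by rewrite (min_l s) in l120x].
Qed.

Lemma in_A2_of_sides p q : side 1 p q -> side 2 p q -> in_A 2 p q.
Proof.
rewrite /side => in_H1 in_H2; have s_gt0 := s3_gt0; have s_neq0 : s3 R != 0 by rewrite gt_eqF.
exists ((lev120 q - lev120 p) / s3 R), ((lev60 q - lev60 p) / s3 R).
split; rewrite ?divr_ge0 ?subr_ge0 ?(ltW s_gt0) //.
by case: q {in_H1 in_H2} => x y; rewrite /dir /lev60 /lev120 /=; congr pair; field.
Qed.

Lemma in_A4_of_sides p q : side 2 p q -> side 3 p q -> in_A 4 p q.
Proof.
rewrite /side => in_H2 in_H3; have s_gt0 := s3_gt0; have s_neq0 : s3 R != 0 by rewrite gt_eqF.
exists ((lev60 q - lev60 p) / s3 R), (2 * (p.2 - q.2) / s3 R).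
split; rewrite ?divr_ge0 ?mulr_ge0 ?subr_ge0 ?(ltW s_gt0) //.
by case: q {in_H2 in_H3} => x y; rewrite /dir /lev60 /lev120 /=; congr pair; field.
Qed.

Lemma in_A6_of_sides p q : side 1 p q -> side 3 p q -> in_A 6 p q.
Proof.
rewrite /side => in_H1 in_H3; have s_gt0 := s3_gt0; have s_neq0 : s3 R != 0 by rewrite gt_eqF.
exists (2 * (p.2 - q.2) / s3 R), ((lev120 q - lev120 p) / s3 R).
split; rewrite ?divr_ge0 ?mulr_ge0 ?subr_ge0 ?(ltW s_gt0) //.
by case: q {in_H1 in_H3} => x y; rewrite /dir /lev60 /lev120 /=; congr pair; field.
Qed.

Lemma sides_in_Cbar i j k p q :
  i \in [:: 1; 2; 3]%N -> j \in [:: 1; 2; 3]%N -> k \in [:: 1; 2; 3]%N ->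
  i != j -> k != i -> k != j ->
  side i p q -> side j p q -> in_A (Cbar_idx k) p q.
Proof.
rewrite !inE => /or3P[]/eqP-> /or3P[]/eqP-> /or3P[]/eqP-> //= _ _ _ si sj;
first [exact: in_A2_of_sides | exact: in_A4_of_sides | exact: in_A6_of_sides].
Qed.

End DownTriangles.

Theorem mainTheorem5 (R : rcfType) (P : seq (pt R)) (p : pt R) (i j k : nat) :
  general_position P -> p \in P -> degree_one P p ->
  i \in [:: 1; 2; 3]%N -> j \in [:: 1; 2; 3]%N -> k \in [:: 1; 2; 3]%N ->
  i != j -> k != i -> k != j ->
  V_nonempty P i p -> V_nonempty P j p ->
  Vbar_nonempty P k p.
Proof.
move=> gp pP [q [qP adj_q unique_q]] hi hj hk nij nki nkj Vi Vj.
have q_side l : l \in [:: 1; 2; 3]%N -> V_nonempty P l p -> side l p q.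
  move=> hl [u [uP nup Cu]].
  have [r rP [adj_r span_r]] := neighbour_in_span gp pP uP nup.
  by rewrite -(unique_q r rP adj_r); apply: span_side (cone_side hl Cu) span_r.
exists q; split => //; first by case: adj_q; rewrite eq_sym.
exact: sides_in_Cbar hi hj hk nij nki nkj (q_side i hi Vi) (q_side j hj Vj).
Qed.
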